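(* Let $\mathcal{N}=(Q,\Sigma,\Delta,q_0,F)$ be a history-deterministic one-counter net. A strategy $\sigma$ of Eve in the letter game on $\mathcal{N}$ is winning for Eve if and only if every step $(p,k)\xrightarrow{a,d}(p',k')$ that $\sigma$ takes is a good transition.
   Context: A one-counter net (OCN) is $\mathcal{N}=(Q,\Sigma,\Delta,q_0,F)$ with $Q$ finite, $\Sigma$ finite, $q_0\in Q$, $F\subseteq Q$, $\Delta\subseteq Q\times\Sigma\times\{-1,0,1\}\times Q$; configurations $(q,n)\in Q\times\mathbb{N}$, step $(q,n)\xrightarrow{a,d}(p,n+d)$ if $(q,a,d,p)\in\Delta$ and $n+d\ge0$; runs start at $(q_0,0)$ and are accepting if the last state is in $F$; $\mathcal{L}(\mathcal{N})$ is the set of words with an accepting run. Letter game: positions $(c,w)$, start $((q_0,0),\varepsilon)$; each round Adam picks $a\in\Sigma$, Eve picks a step $c\xrightarrow{a,d}c'$; if Eve has none and $wa$ is a prefix of a word of $\mathcal{L}(\mathcal{N})$ she loses; if $wa\in\mathcal{L}(\mathcal{N})$ but the state of $c'$ is not in $F$, Adam wins; otherwise continue from $(c',wa)$; Eve wins infinite plays. $\mathcal{N}$ is history-deterministic if Eve wins the letter game. The game $G_1$ on $\mathcal{N}$ from a position $(c^E,c^A)$ (Eve's token, Adam's token): each round Adam picks $a\in\Sigma$; Eve picks a step $c^E\xrightarrow{a,d}c^E_{+}$; Adam picks a step $c^A\xrightarrow{a,d'}c^A_{+}$. If Adam cannot move his token, he loses. If Eve cannot move while Adam can move and extend his run to an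 accepting run, Eve loses. If both move and the state of $c^A_+$ is in $F$ but that of $c^E_+$ is not, Eve loses. Otherwise continue; Eve wins infinite plays. A transition $\delta=(p,a,d,p')\in\Delta$ is good at $(p,k)$ (equivalently, the step $(p,k)\xrightarrow{a,d}(p',k+d)$ is good) if Eve wins $G_1$ from $((p,k),(p,k))$ and choosing this step is a winning move for Eve there when Adam chooses the letter $a$. *)

From mathcomp Require Import all_boot all_order all_algebra.
Set Implicit Arguments. Unset Strict Implicit. Unset Printing Implicit Defensive.
Import Order.TTheory GRing.Theory Num.Theory.

Section OCN.
Variables (Q Sigma : finType).

Definition trans := (Q * Sigma * int * Q)%type.
Definition tsrc (t : trans) : Q := t.1.1.1.
Definition tlbl (t : trans) : Sigma := t.1.1.2.
Definition tdir (t : trans) : int := t.1.2.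
Definition ttgt (t : trans) : Q := t.2.

Record ocn := OCN {
  delta : seq trans;
  delta_dir : all (fun t => tdir t \in [:: (-1)%R; 0%R; 1%R]) delta;
  init : Q;
  final : {set Q}
}.

Definition config := (Q * nat)%type.

Variable N : ocn.

Definition fire (c : config) (t : trans) : option config :=
  if (t \in delta N) && (tsrc t == c.1) && (0 <= (Posz c.2) + tdir t)%R
  then Some (ttgt t, `|(Posz c.2 + tdir t)%R|%N) else None.

Fixpoint exec (c : config) (ts : seq trans) : option config :=
  match ts with
  | [::] => Some c
  | t :: ts' => match fire c t with Some c' => exec c' ts' | None => None end
  end.

Definition accepts_from (c : config) (w : seq Sigma) : Prop :=
  exists ts, map tlbl ts = w /\ exists c', exec c ts = Some c' /\ c'.1 \in final N.

Definition lang (w : seq Sigma) : Prop := accepts_from (init N, 0%N) w.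
Definition lprefix (w : seq Sigma) : Prop := exists v, lang (w ++ v).

Definition apply_move (o : option trans) (c : config) (a : Sigma) : option config :=
  match o with
  | Some t => if tlbl t == a then fire c t else None
  | None => None
  end.

(* An Eve strategy maps the word read so far and Adam's new letter to a
   transition (None = no move). Eve's configuration is determined by the word. *)
Definition lstrategy := seq Sigma -> Sigma -> option trans.

Fixpoint lrun (s : lstrategy) (h : seq Sigma) (c : config) (w : seq Sigma)
  : option config :=
  match w with
  | [::] => Some c
  | a :: w' => match apply_move (s h a) c a with
               | Some c' => lrun s (rcons h a) c' w'
               | None => None
               end
  end.

Definition lconf (s : lstrategy) (w : seq Sigma) := lrun s [::] (init N, 0%N) w.

(* position (c, w) is reached in a play consistent with s (the play has not
   ended earlier by a win of Adam) *)
Definition lreach (s : lstrategy) (w : seq Sigma) (c : config) : Prop :=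
  lconf s w = Some c /\
  forall n c', (0 < n)%N -> lconf s (take n w) = Some c' -> lang (take n w) ->
     c'.1 \in final N.

Definition llegal (s : lstrategy) : Prop :=
  forall w c a, lreach s w c ->
    (exists t, tlbl t = a /\ fire c t <> None) -> apply_move (s w a) c a <> None.

Definition lwinning (s : lstrategy) : Prop :=
  forall w c a, lreach s w c ->
    (apply_move (s w a) c a = None -> ~ lprefix (rcons w a)) /\
    (forall c', apply_move (s w a) c a = Some c' -> lang (rcons w a) ->
        c'.1 \in final N).

Definition history_deterministic : Prop :=
  exists s, llegal s /\ lwinning s.

(* History: sequence of (letter, Adam's transition); Eve's moves are
   determined by her strategy. *)
Definition g1strategy := seq (Sigma * trans) -> Sigma -> option trans.

Fixpoint g1run (s : g1strategy) (h : seq (Sigma * trans)) (cE cA : config)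
   (r : seq (Sigma * trans)) : option (config * config) :=
  match r with
  | [::] => Some (cE, cA)
  | (a, tA) :: r' =>
      match apply_move (s h a) cE a, apply_move (Some tA) cA a with
      | Some cE', Some cA' => g1run s (rcons h (a, tA)) cE' cA' r'
      | _, _ => None
      end
  end.

(* s is a winning strategy for Eve in G1 from position p0 = (Eve's token, Adam's token) *)
Definition g1winning (s : g1strategy) (p0 : config * config) : Prop :=
  forall h cE cA a, g1run s [::] p0.1 p0.2 h = Some (cE, cA) ->
    ((exists t, tlbl t = a /\ fire cE t <> None) -> apply_move (s h a) cE a <> None) /\
    (apply_move (s h a) cE a = None -> ~ (exists v, accepts_from cA (a :: v))) /\
    (forall cE' tA cA', apply_move (s h a) cE a = Some cE' -> tlbl tA = a ->
        fire cA tA = Some cA' -> cA'.1 \in final N -> cE'.1 \in final N).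

Definition good (t : trans) (k : nat) : Prop :=
  fire (tsrc t, k) t <> None /\
  exists s, g1winning s ((tsrc t, k), (tsrc t, k)) /\ s [::] (tlbl t) = Some t.

End OCN.

(* Winning implies good: from any position reached by a winning strategy s, the
   strategy "continue as s" wins G1 against every run of Adam on the same word,
   so in particular each step it takes is good.
   Good implies winning: by induction on the word, Eve has a weakly winning G1
   strategy from (her letter-game configuration, any configuration reached by a
   run on the same word). History-determinism gives the base case. For the
   induction step, a strategy witnessing that Eve's step is good is composed
   with the strategy obtained so far; G1 strategies compose like a transitive
   relation. *)
From mathcomp Require Import all_boot all_order all_algebra.
From Stdlib Require Import Classical.
Set Implicit Arguments. Unset Strict Implicit. Unset Printing Implicit Defensive.

Section GoodTransitions.
Variables (Q Sigma : finType) (N : ocn Q Sigma).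

Lemma exec_cat (c : config Q) ts1 ts2 :
  exec N c (ts1 ++ ts2) = obind (exec N ^~ ts2) (exec N c ts1).
Proof. by elim: ts1 c => [|t ts IH] c //=; case: (fire N c t). Qed.

Lemma accepts_nilE (c : config Q) : accepts_from N c [::] <-> c.1 \in final N.
Proof.
split; first by case=> -[|t ts] [//= _ [c' [[<-]]]].
by move=> Fc; exists [::]; split => //; exists c.
Qed.

Lemma accepts_consP (c : config Q) a v :
  accepts_from N c (a :: v) <->
  exists t c', [/\ tlbl t = a, fire N c t = Some c' & accepts_from N c' v].
Proof.
split.
  case=> -[|t ts] [//= [<- Hv] [c']].
  case Hf: (fire N c t) => [c1|] [He Fin] //.
  by exists t, c1; split => //; exists ts; split => //; exists c'.
case=> t [c' [<- Hf [ts [<- [c'' [He Fin]]]]]].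
by exists (t :: ts); split => //; exists c''; rewrite /= Hf.
Qed.

Lemma apply_moveP o (c : config Q) a c' : apply_move N o c a = Some c' ->
  exists t, [/\ o = Some t, tlbl t = a & fire N c t = Some c'].
Proof. by case: o => [t|] //=; case: eqP => // <- Hf; exists t. Qed.

Lemma fire_tsrc (c : config Q) t c' : fire N c t = Some c' -> tsrc t = c.1.
Proof. by rewrite /fire; case: ifP => // /andP [/andP [_ /eqP]]. Qed.

Definition dead (c : config Q) : Prop := forall v, ~ accepts_from N c v.

Lemma dead_fire (c : config Q) t c' : dead c -> fire N c t = Some c' -> dead c'.
Proof. by move=> Dc Hf v Hv; apply: (Dc (tlbl t :: v)); apply/accepts_consP; exists t, c'. Qed.

Lemma dead_final (c : config Q) : dead c -> c.1 \notin final N.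
Proof. by move=> Dc; apply/negP => /accepts_nilE; apply: Dc. Qed.

Lemma not_dead (c : config Q) : ~ dead c -> exists v, accepts_from N c v.
Proof. exact: not_all_not_ex. Qed.

Lemma g1run_cat (g : g1strategy Q Sigma) h cE cA r1 r2 :
  g1run N g h cE cA (r1 ++ r2) =
  if g1run N g h cE cA r1 is Some (x, y) then g1run N g (h ++ r1) x y r2 else None.
Proof.
elim: r1 h cE cA => [|[a tA] r IH] h cE cA /=; first by rewrite cats0.
case: (apply_move N (g h a) cE a) => [x|] //.
by case: (if tlbl tA == a then fire N cA tA else None) => [y|] //; rewrite IH cat_rcons.
Qed.

Lemma g1run_rcons (g : g1strategy Q Sigma) h0 x y h a tA x0 y0 x' y' :
  g1run N g h0 x y h = Some (x0, y0) ->
  apply_move N (g (h0 ++ h) a) x0 a = Some x' -> tlbl tA = a ->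
  fire N y0 tA = Some y' -> g1run N g h0 x y (rcons h (a, tA)) = Some (x', y').
Proof. by move=> Hh Hm Hl Hf; rewrite -cats1 g1run_cat Hh /= Hm Hl eqxx Hf. Qed.

Lemma g1run_rcons_inv (g : g1strategy Q Sigma) h0 x y h a tA x' y' :
  g1run N g h0 x y (rcons h (a, tA)) = Some (x', y') ->
  exists x0 y0, [/\ g1run N g h0 x y h = Some (x0, y0),
    apply_move N (g (h0 ++ h) a) x0 a = Some x', tlbl tA = a &
    fire N y0 tA = Some y'].
Proof.
rewrite -cats1 g1run_cat; case: (g1run N g h0 x y h) => [[x0 y0]|] //=.
case Hm: (apply_move N (g (h0 ++ h) a) x0 a) => [x1|] //=.
case: eqP => [Hl|_ ?] //; case Hf: (fire N y0 tA) => [y1|] // [<- <-].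
by exists x0, y0.
Qed.

Lemma g1run_shift (g : g1strategy Q Sigma) r h0 x y h :
  g1run N (fun h => g (r ++ h)) h0 x y h = g1run N g (r ++ h0) x y h.
Proof.
elim: h h0 x y => [|[a tA] h IH] h0 x y //=.
case: (apply_move N (g (r ++ h0) a) x a) => [x'|] //.
by case: (if tlbl tA == a then fire N y tA else None) => [y'|] //; rewrite IH rcons_cat.
Qed.

Lemma dead_g1run (g : g1strategy Q Sigma) h0 x z h cE cA :
  g1run N g h0 x z h = Some (cE, cA) -> dead z -> dead cA.
Proof.
elim: h h0 x z => [|[a tA] h IH] h0 x z /=; first by case=> _ <-.
case: (apply_move N (g h0 a) x a) => [x'|] //; case: eqP => // _.
case Hf: (fire N z tA) => [z'|] // Hh Dz.
exact: IH Hh (dead_fire Dz Hf).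
Qed.

Definition g1round_safe (g : g1strategy Q Sigma) h (cE cA : config Q) a : Prop :=
  (apply_move N (g h a) cE a = None -> ~ (exists v, accepts_from N cA (a :: v))) /\
  (forall cE' tA cA', apply_move N (g h a) cE a = Some cE' -> tlbl tA = a ->
      fire N cA tA = Some cA' -> cA'.1 \in final N -> cE'.1 \in final N).

Lemma dead_g1round_safe g h cE cA a : dead cA -> g1round_safe g h cE cA a.
Proof.
move=> DA; split; first by move=> _ [v /DA].
by move=> cE' tA cA' _ _ Hf; rewrite (negbTE (dead_final (dead_fire DA Hf))).
Qed.

(* [g1winning] without its first clause (Eve's obligation to move whenever
   she can); this weaker condition is the one that composes. *)
Definition weakly_g1winning (g : g1strategy Q Sigma) (p0 : config Q * config Q) : Prop :=
  forall h cE cA a, g1run N g [::] p0.1 p0.2 h = Some (cE, cA) -> g1round_safe g h cE cA a.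

Lemma g1winning_weakly g p0 : g1winning N g p0 -> weakly_g1winning g p0.
Proof. by move=> W h cE cA a /(W _ _ _ a) [_]. Qed.

Lemma weakly_g1winning_shift g p0 r x y : weakly_g1winning g p0 ->
  g1run N g [::] p0.1 p0.2 r = Some (x, y) ->
  weakly_g1winning (fun h => g (r ++ h)) (x, y).
Proof.
move=> W Hr h cE cA a /= Hh; apply: W.
by rewrite g1run_cat Hr -Hh g1run_shift cats0.
Qed.

Lemma weakly_g1winning_dead g x z : dead z -> weakly_g1winning g (x, z).
Proof. by move=> Dz h cE cA a /dead_g1run /(_ Dz) /dead_g1round_safe. Qed.

Lemma weakly_g1winning_move g p0 h cE cA a v : weakly_g1winning g p0 ->
  g1run N g [::] p0.1 p0.2 h = Some (cE, cA) -> accepts_from N cA (a :: v) ->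
  exists cE', apply_move N (g h a) cE a = Some cE'.
Proof.
move=> W Hh Hv; case Hm: (apply_move N (g h a) cE a) => [cE'|]; first by exists cE'.
by case: ((W h cE cA a Hh).1 Hm); exists v.
Qed.

Lemma weakly_g1winning_accepts g p0 h cE cA a v : weakly_g1winning g p0 ->
  g1run N g [::] p0.1 p0.2 h = Some (cE, cA) ->
  accepts_from N cA (a :: v) -> accepts_from N cE (a :: v).
Proof.
move=> W; elim: v h cE cA a => [|b v IH] h cE cA a Hh Hacc;
  have [cE' Hm] := weakly_g1winning_move W Hh Hacc;
  have [tE [_ HlE HfE]] := apply_moveP Hm;
  apply/accepts_consP; exists tE, cE'; split => //;
  move/accepts_consP: Hacc => [tA [cA' [HlA HfA Hv]]].
  apply/accepts_nilE; apply: (W h cE cA a Hh).2 Hm HlA HfA _.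
  exact/accepts_nilE.
exact: IH (g1run_rcons Hh Hm HlA HfA) Hv.
Qed.

(* Playing [g1compose g1 g2] from (x, z), Eve runs g1 from (x, y) against a
   virtual Adam who copies g2's answers, from (y, z), to the real Adam; [relay]
   rewrites the history accordingly.  Once g2 is stuck (the [odflt] junk case)
   Adam's token is dead, so the rest of the play is irrelevant. *)
Fixpoint relay (g2 : g1strategy Q Sigma) (past h : seq (Sigma * trans Q Sigma)) :
    seq (Sigma * trans Q Sigma) :=
  if h is x :: h' then (x.1, odflt x.2 (g2 past x.1)) :: relay g2 (rcons past x) h'
  else [::].

Lemma relay_rcons g2 past h x : relay g2 past (rcons h x) =
  rcons (relay g2 past h) (x.1, odflt x.2 (g2 (past ++ h) x.1)).
Proof. by elim: h past => [|y h IH] past /=; rewrite ?cats0 // IH cat_rcons. Qed.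

Definition g1compose (g1 g2 : g1strategy Q Sigma) : g1strategy Q Sigma :=
  fun h a => g1 (relay g2 [::] h) a.

Lemma g1compose_run g1 g2 x y z h cC cD : weakly_g1winning g2 (y, z) ->
  g1run N (g1compose g1 g2) [::] x z h = Some (cC, cD) ->
  (exists cE, g1run N g1 [::] x y (relay g2 [::] h) = Some (cC, cE) /\
              g1run N g2 [::] y z h = Some (cE, cD)) \/ dead cD.
Proof.
move=> W2; elim/last_ind: h cC cD => [|h [a tA] IH] cC cD.
  by case=> <- <-; left; exists y.
case/g1run_rcons_inv => cC0 [cD0 [Hh HmC HlA HfA]].
case: (IH _ _ Hh) => [[cE [Hg1 Hg2]]|D0]; last by right; exact: dead_fire D0 HfA.
case: (classic (dead cD)) => [DD|/not_dead [v Hv]]; first by right.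
have Hacc : accepts_from N cD0 (a :: v) by apply/accepts_consP; exists tA, cD.
have [cE' Hm2] := weakly_g1winning_move W2 Hg2 Hacc.
have [tE [Hg2t HlE HfE]] := apply_moveP Hm2.
left; exists cE'; split; last exact: g1run_rcons Hg2 Hm2 HlA HfA.
by rewrite relay_rcons /= Hg2t; apply: g1run_rcons Hg1 HmC HlE HfE.
Qed.

Lemma weakly_g1winning_compose g1 g2 x y z :
  weakly_g1winning g1 (x, y) -> weakly_g1winning g2 (y, z) ->
  weakly_g1winning (g1compose g1 g2) (x, z).
Proof.
move=> W1 W2 h cC cD a Hh.
case: (g1compose_run W2 Hh) => [[cE [Hg1 Hg2]]|DD]; last first.
  exact: dead_g1round_safe.
have [W12 W13] := W1 _ cC cE a Hg1; rewrite /g1round_safe /g1compose; split.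
  by move=> /W12 + [v Hv]; apply; exists v; exact: weakly_g1winning_accepts W2 Hg2 Hv.
move=> cC' tA cD' Hm Hl Hf FD.
have Hacc : accepts_from N cD (a :: [::]).
  by apply/accepts_consP; exists tA, cD'; split => //; apply/accepts_nilE.
have [cE' Hm2] := weakly_g1winning_move W2 Hg2 Hacc.
have [tE [_ HlE HfE]] := apply_moveP Hm2.
exact: W13 Hm HlE HfE ((W2 h cE cD a Hg2).2 _ _ _ Hm2 Hl Hf FD).
Qed.

Lemma weakly_g1winning_good_step g c d t c' tA d' :
  weakly_g1winning g (c, d) -> good N t c.2 -> fire N c t = Some c' ->
  tlbl tA = tlbl t -> fire N d tA = Some d' ->
  (d'.1 \in final N -> c'.1 \in final N) /\
  exists g', weakly_g1winning g' (c', d').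
Proof.
move=> W Gt Hf HlA HfA.
case: (classic (dead d')) => [Dd'|/not_dead [v Hv]].
  split; last by exists g; apply: weakly_g1winning_dead.
  by move=> Fd'; case/negP: (dead_final Dd').
have Hacc : accepts_from N d (tlbl t :: v) by apply/accepts_consP; exists tA, d'.
have [e He] := weakly_g1winning_move (h := [::]) W erefl Hacc.
have [tE [_ HlE HfE]] := apply_moveP He.
have Hgd : g1run N g [::] c d [:: (tlbl t, tA)] = Some (e, d').
  exact: (g1run_rcons (h := [::]) erefl He HlA HfA).
move: Gt; rewrite /good (fire_tsrc Hf) -surjective_pairing => -[_ [gt [Wt Ht]]].
have Hmt : apply_move N (gt [::] (tlbl t)) c (tlbl t) = Some c'.
  by rewrite Ht /= eqxx Hf.
have Hgt : g1run N gt [::] c c [:: (tlbl t, tE)] = Some (c', e).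
  exact: (g1run_rcons (h := [::]) erefl Hmt HlE HfE).
split.
  move=> Fd'; apply: (Wt [::] c c (tlbl t) erefl).2.2 Hmt HlE HfE _.
  exact: (W [::] c d (tlbl t) erefl).2 He HlA HfA Fd'.
eexists; apply: weakly_g1winning_compose.
  exact: weakly_g1winning_shift (g1winning_weakly Wt) Hgt.
exact: weakly_g1winning_shift W Hgd.
Qed.

Lemma lrun_cat (s : lstrategy Q Sigma) h c w1 w2 :
  lrun N s h c (w1 ++ w2) = obind (lrun N s (h ++ w1) ^~ w2) (lrun N s h c w1).
Proof.
elim: w1 h c => [|a w IH] h c /=; first by rewrite cats0.
by case: (apply_move N (s h a) c a) => [c'|] //; rewrite IH cat_rcons.
Qed.

Lemma lconf_rcons s w a :
  lconf N s (rcons w a) = obind (fun c => apply_move N (s w a) c a) (lconf N s w).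
Proof.
rewrite /lconf -cats1 lrun_cat; case: (lrun N s [::] _ w) => [c|] //=.
by case: (apply_move N (s w a) c a).
Qed.

Lemma lrun_exec (s : lstrategy Q Sigma) h c w c' : lrun N s h c w = Some c' ->
  exists ts, map (@tlbl Q Sigma) ts = w /\ exec N c ts = Some c'.
Proof.
elim: w h c => [|a w IH] h c /=; first by case=> <-; exists [::].
case Hm: (apply_move N (s h a) c a) => [c1|] // /IH [ts [<- He]].
have [t [_ <- Hf]] := apply_moveP Hm.
by exists (t :: ts); rewrite /= Hf.
Qed.

Lemma lang_cat_split w u : lang N (w ++ u) ->
  exists ts d, [/\ map (@tlbl Q Sigma) ts = w, exec N (init N, 0%N) ts = Some d &
                   accepts_from N d u].
Proof.
case=> ts [Hts [cf [He Fin]]].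
move: He; rewrite -(cat_take_drop (size w) ts) exec_cat.
case Hd: (exec N _ (take (size w) ts)) => [d|] //= He.
exists (take (size w) ts), d; split => //; first by rewrite map_take Hts take_size_cat.
by exists (drop (size w) ts); split; [rewrite map_drop Hts drop_size_cat | exists cf].
Qed.

Lemma lreach_nil s : lreach N s [::] (init N, 0%N).
Proof. by split => // n c _ /= [<-] /accepts_nilE. Qed.

Lemma lreach_rcons s w c a c' : lwinning N s -> lreach N s w c ->
  apply_move N (s w a) c a = Some c' -> lreach N s (rcons w a) c'.
Proof.
move=> Win [Hc Fin] Hm; split; first by rewrite lconf_rcons Hc.
move=> n c1 Hn; case: (leqP n (size w)) => Hnw.
  by rewrite -cats1 takel_cat //; apply: Fin.
rewrite take_oversize ?size_rcons // lconf_rcons Hc /= Hm => -[<-].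
exact: (Win w c a (conj Hc Fin)).2.
Qed.

Lemma lreach_rcons_inv s w a c' : lreach N s (rcons w a) c' ->
  exists c, lreach N s w c /\ apply_move N (s w a) c a = Some c'.
Proof.
case; rewrite lconf_rcons; case Hw: (lconf N s w) => [c|] //= Hm Fin.
exists c; split => //; split => // n c1 Hn.
case: (leqP n (size w)) => Hnw.
  by move=> Hc1 Hl; apply: (Fin n c1 Hn); rewrite -cats1 takel_cat.
rewrite take_oversize; last exact: ltnW.
case: (posnP (size w)) => [/size0nil -> [<-] /accepts_nilE //| Hw0] Hc1 Hl.
by apply: (Fin (size w) c1 Hw0); rewrite -cats1 takel_cat // take_size.
Qed.

(* A G1 play is a letter-game play for Eve together with a run for Adam on
   the same word. *)
Lemma lwinning_g1winning s w c ts d : llegal N s -> lwinning N s ->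
  lreach N s w c -> map (@tlbl Q Sigma) ts = w -> exec N (init N, 0%N) ts = Some d ->
  g1winning N (fun h a => s (w ++ map fst h) a) (c, d).
Proof.
move=> Leg Win Hr Hts He.
have Inv h cE cA : g1run N (fun h a => s (w ++ map fst h) a) [::] c d h = Some (cE, cA) ->
    lreach N s (w ++ map fst h) cE /\ exists ts', map (@tlbl Q Sigma) ts' = w ++ map fst h /\
                                   exec N (init N, 0%N) ts' = Some cA.
  elim/last_ind: h cE cA => [|h [a tA] IH] cE cA.
    by case=> <- <-; rewrite cats0; split => //; exists ts.
  case/g1run_rcons_inv => x0 [y0 [Hh Hm Hl Hf]].
  have [Hr' [ts' [Hts' He']]] := IH _ _ Hh.
  rewrite map_rcons -rcons_cat; split; first exact: lreach_rcons Win Hr' Hm.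
  exists (rcons ts' tA); rewrite map_rcons Hts' Hl; split => //.
  by rewrite -cats1 exec_cat He' /= Hf.
move=> h cE cA a /Inv [Hr' [ts' [Hts' He']]]; split; [|split].
- exact: Leg Hr'.
- move=> Hn [v [ts2 [Hl2 [cf [He2 Fin]]]]]; case: ((Win _ _ a Hr').1 Hn).
  exists v, (ts' ++ ts2); split; first by rewrite map_cat Hts' Hl2 cat_rcons.
  by exists cf; rewrite exec_cat He'.
- move=> cE' tA cA' Hm Hl Hf FA; apply: (Win _ _ a Hr').2 Hm _.
  exists (rcons ts' tA); split; first by rewrite map_rcons Hts' Hl.
  by exists cA'; rewrite -cats1 exec_cat He' /= Hf.
Qed.

Definition takes_good_steps (s : lstrategy Q Sigma) : Prop :=
  forall w c a t c', lreach N s w c -> s w a = Some t -> tlbl t = a ->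
    fire N c t = Some c' -> good N t c.2.

Lemma lwinning_takes_good_steps s : llegal N s -> lwinning N s -> takes_good_steps s.
Proof.
move=> Leg Win w c a t c' Hr Hs Hl Hf.
have [ts [Hts He]] := lrun_exec Hr.1.
rewrite /good (fire_tsrc Hf) -surjective_pairing; split; first by rewrite Hf.
exists (fun h b => s (w ++ map fst h) b); split; first exact: lwinning_g1winning He.
by rewrite cats0 Hl.
Qed.

Lemma takes_good_steps_weakly_g1winning s w c ts d :
  history_deterministic N -> takes_good_steps s -> lreach N s w c ->
  map (@tlbl Q Sigma) ts = w -> exec N (init N, 0%N) ts = Some d ->
  exists g, weakly_g1winning g (c, d).
Proof.
move=> [sig [Lsig Wsig]] Good.
elim/last_ind: w c ts d => [|w a IH] c ts d.
  case=> -[<-] _; case: ts => [|//] _ [<-].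
  eexists; apply/g1winning_weakly.
  exact: (lwinning_g1winning (ts := [::]) Lsig Wsig (lreach_nil sig)).
case/lreach_rcons_inv => c0 [Hr Hm]; have [t [Hs Hl Hf]] := apply_moveP Hm.
case/lastP: ts => [|ts tA]; first by move/(congr1 size); rewrite size_rcons.
rewrite map_rcons => /rcons_inj [Hts HlA]; rewrite -cats1 exec_cat.
case He: (exec N _ ts) => [d0|] //=; case HfA: (fire N d0 tA) => [d'|] // [<-].
have [g W] := IH _ _ _ Hr Hts He.
have HlAt : tlbl tA = tlbl t by rewrite HlA Hl.
exact: (weakly_g1winning_good_step W (Good _ _ _ _ _ Hr Hs Hl Hf) Hf HlAt HfA).2.
Qed.

Lemma takes_good_steps_lwinning s : history_deterministic N -> llegal N s ->
  takes_good_steps s -> lwinning N s.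
Proof.
move=> HD Leg Good w c a Hr; split.
  move=> Hn [v]; rewrite cat_rcons => /lang_cat_split [ts [d [Hts He Hacc]]].
  have [g W] := takes_good_steps_weakly_g1winning HD Good Hr Hts He.
  have [e /apply_moveP [tE [_ HlE HfE]]] := weakly_g1winning_move (h := [::]) W erefl Hacc.
  by apply: (Leg w c a Hr) Hn; exists tE; rewrite HfE.
move=> c' Hm; rewrite -cats1 => /lang_cat_split [ts [d [Hts He]]].
case/accepts_consP => tA [d' [HlA HfA /accepts_nilE Fd']].
have [t [Hs Hl Hf]] := apply_moveP Hm.
have [g W] := takes_good_steps_weakly_g1winning HD Good Hr Hts He.
have HlAt : tlbl tA = tlbl t by rewrite HlA Hl.
exact: (weakly_g1winning_good_step W (Good _ _ _ _ _ Hr Hs Hl Hf) Hf HlAt HfA).1.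
Qed.

End GoodTransitions.

Theorem lemma5 (Q Sigma : finType) (N : ocn Q Sigma) :
  history_deterministic N ->
  forall s : lstrategy Q Sigma, llegal N s ->
    (lwinning N s <->
     (forall w c a t c', lreach N s w c -> s w a = Some t -> tlbl t = a ->
        fire N c t = Some c' -> good N t c.2)).
Proof.
move=> HD s Leg; split; first exact: lwinning_takes_good_steps.
exact: takes_good_steps_lwinning.
Qed.
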